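(* Let $T$ be an equidistant tree with $n$ leaves and ultrametric $u$, and let $t_1<t_2<\dots<t_k$ ($k\le n-1$) be its speciation times. For $i=1,\dots,k$ let $T^i$ be the equidistant tree whose ultrametric $w^i$ is given by $w^i_{pq}=\max\{2t_i,\,u_{pq}\}$ for all leaves $p<q$ (so $T^1=T$ and $T^k$ is the star tree). Then the tropical line segment in $\mathcal{U}_n$ from $u$ to the origin (the ultrametric of the star tree with $n$ leaves) is the union of the ordinary line segments between the ultrametrics $w^i$ and $w^{i+1}$ of $T^i$ and $T^{i+1}$, for $i=1,\dots,k-1$.
   Context: Max-plus arithmetic: $a\oplus b=\max\{a,b\}$, $a\odot b=a+b$; $e=\binom n2$; points of $\mathbb{R}^e$ (coordinates indexed by pairs $p<q$ of leaves in $\{1,\dots,n\}$) are considered modulo $\mathbb{R}\mathbf 1$, so the origin is the class of constant vectors. An equidistant tree is a rooted phylogenetic tree with nonnegative edge lengths and all root-to-leaf distances equal; its ultrametric $u$ is the vector of pairwise leaf distances $u_{pq}$ (for all distinct $p,q,r$ the maximum of $u_{pq},u_{pr},u_{qr}$ is attained at least twice); $\mathcal U_n$ is the set of ultrametrics in $\mathbb{R}^e/\mathbb{R}\mathbf 1$. The star tree has all leaves attached to the root; its ultrametric is constant. The speciation times of $T$ are the distinct values of $u_{pq}/2$, listed in increasing order $t_1<\dots<t_k$ (the heights above the leaves of the internal nodes). The tropical line segment between $x$ and $y$ is $\{a\odot x\oplus b\odot y:a,b\in\mathbb{R}\}$. *)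

(* Vectors in R^e, e = binom(n,2), are represented as
   functions x : 'I_n -> 'I_n -> R of which only the coordinates x p q
   with p < q are used. *)
From HB Require Import structures.
From mathcomp Require Import all_boot all_order all_algebra.
From mathcomp Require Import reals.
Set Implicit Arguments. Unset Strict Implicit. Unset Printing Implicit Defensive.
Import Order.TTheory GRing.Theory Num.Theory.
Local Open Scope ring_scope.

Section Defs.
Variables (R : realType) (n : nat).

Definition vec := 'I_n -> 'I_n -> R.

Definition upair (u : vec) (p q : 'I_n) : R :=
  if (p < q)%N then u p q else u q p.

Definition is_ultrametric (u : vec) : Prop :=
  (forall p q : 'I_n, (p < q)%N -> 0 <= u p q) /\
  (forall p q r : 'I_n, p != q -> p != r -> q != r ->
     let a := upair u p q in let b := upair u p r in let c := upair u q r in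
     let m := Num.max a (Num.max b c) in
     (2 <= (a == m) + (b == m) + (c == m))%N).

Definition speciation_times (u : vec) : seq R :=
  sort <=%R (undup [seq u pq.1 pq.2 / 2 | pq : 'I_n * 'I_n <- enum {: 'I_n * 'I_n} &
                                         (pq.1 < pq.2)%N]).

(* w^i_pq = max (2 t_i) u_pq  (0-based index i) *)
Definition wtree (u : vec) (i : nat) : vec :=
  fun p q => Num.max (2 * nth 0 (speciation_times u) i) (u p q).

(* equality in R^e / R 1 *)
Definition eq_mod1 (x y : vec) : Prop :=
  exists c : R, forall p q : 'I_n, (p < q)%N -> x p q = y p q + c.

Definition in_trop_segment (x y z : vec) : Prop :=
  exists a b : R, eq_mod1 z (fun p q => Num.max (a + x p q) (b + y p q)).

Definition in_segment (x y z : vec) : Prop :=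
  exists lam : R, 0 <= lam <= 1 /\
    eq_mod1 z (fun p q => lam * x p q + (1 - lam) * y p q).

Definition origin : vec := fun _ _ => 0.
End Defs.

(* Since a ⊙ u ⊕ b ⊙ 0 = a + max(u, b - a), the tropical segment from u to the
   origin consists, modulo constants, of the vectors max(u, d) with d real.  All
   coordinates of u lie in [2 t_1, 2 t_k], so d may be clamped to that interval.
   When 2 t_i <= d <= 2 t_(i+1), no coordinate of u lies strictly between the two
   bounds, so every coordinate max(u_pq, d) is affine in d there: max(u, d) is the
   convex combination of w^i and w^(i+1) with the weights expressing d in terms of
   2 t_i and 2 t_(i+1). *)
From HB Require Import structures.
From mathcomp Require Import all_boot all_order all_algebra.
From mathcomp Require Import reals ring lra.
Import Order.TTheory GRing.Theory Num.Theory.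
Local Open Scope ring_scope.
Set Implicit Arguments. Unset Strict Implicit.

Section MaxAlgebra.
Variable R : realFieldType.
Implicit Types x y d lam U : R.

Lemma maxr_clamp (lo hi d : R) : lo <= hi ->
  exists2 d', lo <= d' <= hi &
    exists c, forall U, lo <= U <= hi -> Num.max U d = Num.max U d' + c.
Proof.
move=> lohi; have [dlo|lod] := leP d lo.
  exists lo; first by rewrite lexx lohi.
  by exists 0 => U /andP[loU _]; rewrite addr0 !max_l // (le_trans dlo).
have [dhi|hid] := leP d hi.
  by exists d; [rewrite ltW | exists 0 => U _; rewrite addr0].
exists hi; first by rewrite lexx lohi.
exists (d - hi) => U /andP[_ Uhi].
by rewrite !max_r ?(le_trans Uhi (ltW hid)) // addrC subrK.
Qed.

Lemma convex_comb_between x y lam : x <= y -> 0 <= lam <= 1 ->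
  x <= lam * x + (1 - lam) * y <= y.
Proof. by move=> xy /andP[lam0 lam1]; apply/andP; split; nra. Qed.

Lemma maxr_convex x y lam U : x <= y -> U <= x \/ y <= U -> 0 <= lam <= 1 ->
  lam * Num.max x U + (1 - lam) * Num.max y U = Num.max U (lam * x + (1 - lam) * y).
Proof.
move=> xy Uout lam01; have /andP[xl ly] := convex_comb_between xy lam01.
case: Uout => [Ux|yU].
  by rewrite (max_l Ux) (max_l (le_trans Ux xy)) (max_r (le_trans Ux xl)).
rewrite (max_r (le_trans xy yU)) (max_r yU) (max_l (le_trans ly yU)); ring.
Qed.

Lemma convex_coord x y d : x < y -> x <= d <= y ->
  exists2 lam, 0 <= lam <= 1 & lam * x + (1 - lam) * y = d.
Proof.
move=> xy /andP[xd dy]; have yx0 : 0 < y - x by rewrite subr_gt0.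
exists ((y - d) / (y - x)); last by field; rewrite lt0r_neq0.
rewrite divr_ge0 ?subr_ge0 ?(ltW xy) //=.
by rewrite ler_pdivrMr // mul1r lerD2l lerN2.
Qed.
End MaxAlgebra.

Lemma exists_bracket (disp : Order.disp_t) (T : orderType disp) (f : nat -> T) (x : T) K :
  (0 < K)%N -> (f 0 <= x <= f K)%O -> exists2 i, (i < K)%N & (f i <= x <= f i.+1)%O.
Proof.
elim: K => [//|[|K] IH] _ /andP[f0x xfK]; first by exists 0%N; rewrite ?f0x.
have [xfK'|fKx] := leP x (f K.+1).
  have [//||i iK] := IH; first by rewrite f0x.
  by exists i => //; apply: ltnW.
by exists K.+1; rewrite ?(ltW fKx).
Qed.

Section SortedSeq.
Variables (disp : Order.disp_t) (T : porderType disp) (x0 : T) (s : seq T).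
Hypothesis s_sorted : sorted <=%O s.

Lemma sorted_nth_gap x i : x \in s -> (i.+1 < size s)%N ->
  (x <= nth x0 s i)%O \/ (nth x0 s i.+1 <= x)%O.
Proof.
move=> xs isize; rewrite -(nth_index x0 xs).
have idx_lt : (index x s < size s)%N by rewrite index_mem.
have [idx_le|idx_gt] := leqP (index x s) i.
  by left; apply: le_sorted_leq_nth => //; rewrite inE ltnW.
by right; apply: le_sorted_leq_nth.
Qed.

Lemma sorted_nth_range x : x \in s -> (nth x0 s 0 <= x <= nth x0 s (size s).-1)%O.
Proof.
move=> xs; rewrite -(nth_index x0 xs).
have idx_lt : (index x s < size s)%N by rewrite index_mem.
have size_gt0 : (0 < size s)%N by rewrite (leq_ltn_trans _ idx_lt).
by rewrite !le_sorted_leq_nth // ?inE ?prednK // -ltnS prednK.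
Qed.
End SortedSeq.

Section Raise.
Variables (R : realType) (n : nat).
Implicit Types (u x y z : vec R n) (d : R).

(* [raise u d] moves every speciation event of [T] below time [d/2] up to [d/2],
   so that [wtree u i] agrees with [raise u (2 t_i)]. *)
Definition raise u d : vec R n := fun p q => Num.max (u p q) d.

Lemma eq_mod1_shift z x y c :
  (forall p q : 'I_n, (p < q)%N -> x p q = y p q + c) -> eq_mod1 z x -> eq_mod1 z y.
Proof. by move=> xy [c' zx]; exists (c + c') => p q pq; rewrite zx // xy // addrA. Qed.

Lemma in_trop_segment_originE u z :
  in_trop_segment u (@origin R n) z <-> exists d, eq_mod1 z (raise u d).
Proof.
split=> [[a [b zab]]|[d zd]].
  exists (b - a); apply: (eq_mod1_shift (c := a)) zab => p q _.
  by rewrite /raise /origin addr_maxl subrK addr0 [u p q + a]addrC.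
exists 0, d; apply: (eq_mod1_shift (c := 0)) zd => p q _.
by rewrite /raise /origin add0r !addr0.
Qed.

Variable u : vec R n.
Local Notation t := (speciation_times u).

Lemma speciation_times_lt_sorted : sorted <%R t.
Proof. by rewrite sort_lt_sorted undup_uniq. Qed.

Lemma speciation_times_le_sorted : sorted <=%R t.
Proof. exact: sort_le_sorted. Qed.

Lemma mem_speciation_times (p q : 'I_n) : (p < q)%N -> u p q / 2 \in t.
Proof.
move=> pq; rewrite mem_sort mem_undup; apply/mapP; exists (p, q) => //.
by rewrite mem_filter /= pq mem_enum.
Qed.

Lemma speciation_times_ltS i : (i.+1 < size t)%N -> t`_i < t`_i.+1.
Proof. by move=> it; rewrite (lt_sorted_ltn_nth 0 speciation_times_lt_sorted) // inE ltnW. Qed.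

Lemma leaf_dist_range (p q : 'I_n) : (p < q)%N ->
  2 * t`_0 <= u p q <= 2 * t`_(size t).-1.
Proof.
move=> /mem_speciation_times /(sorted_nth_range 0 speciation_times_le_sorted).
by move=> /andP[lo hi]; apply/andP; split; lra.
Qed.

Lemma in_segment_wtreeP i z : (i.+1 < size t)%N ->
  in_segment (wtree u i) (wtree u i.+1) z <->
  exists2 d, 2 * t`_i <= d <= 2 * t`_i.+1 & eq_mod1 z (raise u d).
Proof.
move=> it; have tlt : 2 * t`_i < 2 * t`_i.+1 by rewrite ltr_pM2l ?speciation_times_ltS.
have wtree_convex (lam : R) (p q : 'I_n) : 0 <= lam <= 1 -> (p < q)%N ->
    lam * wtree u i p q + (1 - lam) * wtree u i.+1 p q =
    raise u (lam * (2 * t`_i) + (1 - lam) * (2 * t`_i.+1)) p q.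
  move=> lam01 pq; apply: maxr_convex => //; first exact: ltW tlt.
  have := sorted_nth_gap 0 speciation_times_le_sorted (mem_speciation_times pq) it.
  by case=> ?; [left | right]; lra.
split=> [[lam [lam01 zlam]] | [d dr zd]].
  exists (lam * (2 * t`_i) + (1 - lam) * (2 * t`_i.+1)).
    exact: convex_comb_between (ltW tlt) lam01.
  by apply: (eq_mod1_shift (c := 0)) zlam => p q pq; rewrite wtree_convex ?addr0.
have [lam lam01 dlam] := convex_coord tlt dr.
exists lam; split; first exact: lam01.
apply: (eq_mod1_shift (c := 0)) zd => p q pq.
by rewrite wtree_convex // dlam addr0.
Qed.
End Raise.

Theorem theorem4 (R : realType) (n : nat) (u : vec R n) :
  is_ultrametric u ->
  (1 < size (speciation_times u))%N ->
  forall z : vec R n,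
    in_trop_segment u (@origin R n) z <->
    exists2 i : nat, (i.+1 < size (speciation_times u))%N &
      in_segment (wtree u i) (wtree u i.+1) z.
Proof.
set t := speciation_times u => _ t_size z; rewrite in_trop_segment_originE.
split=> [[d zd] | [i it /(in_segment_wtreeP _ it) [d _ zd]]]; last by exists d.
have size_gt0 : (0 < size t)%N := ltnW t_size.
have last_gt0 : (0 < (size t).-1)%N by rewrite -ltnS prednK.
have t_range : 2 * t`_0 <= 2 * t`_(size t).-1.
  by rewrite ler_pM2l // le_sorted_leq_nth ?inE ?prednK //; apply: speciation_times_le_sorted.
have [d' d'_range [c d_d']] := maxr_clamp d t_range.
have zd' : eq_mod1 z (raise u d').
  apply: (eq_mod1_shift (c := c)) zd => p q pq.
  by rewrite /raise d_d' //; apply: leaf_dist_range.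
have [i ilast d'_i] := exists_bracket (f := fun j => 2 * t`_j) last_gt0 d'_range.
have it : (i.+1 < size t)%N by rewrite -(prednK size_gt0) ltnS.
by exists i => //; apply/(in_segment_wtreeP _ it); exists d'.
Qed.
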